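(* Let $K$ be a compact Hausdorff space without isolated points and let $U$ be a nonempty open subset of $Q_K$. Then there is a nonempty open set $V\subset K$ such that for every $v\in V$ there exists an ultrafilter $\mathfrak U_v$ on $K$ containing no first category set, with $\lim\mathfrak U_v=v$ and $\mathfrak U_v\text{-}\lim\in U$.
   Context: For a compact Hausdorff space $K$ without isolated points: $\ell_\infty(K)$ is the space of bounded real functions on $K$ with the sup norm; $m(K)=\{f\in\ell_\infty(K): \mathrm{supp}(f)\text{ is a first category set in }K\}$; $m_0(K)=\ell_\infty(K)/m(K)$ with the quotient norm, a real commutative $C^*$-algebra. $Q_K$ denotes the set of nonzero real algebra homomorphisms $m_0(K)\to\mathbb R$, with the weak$^*$ topology, so that $m_0(K)\cong C(Q_K)$. For an ultrafilter $\mathfrak U$ on $K$ containing no first category set, $\lim\mathfrak U$ is the point of $K$ to which $\mathfrak U$ converges, and $\mathfrak U\text{-}\lim\in Q_K$ is the homomorphism $[f]\mapsto\lim_{\mathfrak U}f$; every element of $Q_K$ is of this form. *)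

From HB Require Import structures.
From mathcomp Require Import all_boot all_order all_algebra.
From mathcomp Require Import all_classical all_reals all_analysis.
Set Implicit Arguments. Unset Strict Implicit. Unset Printing Implicit Defensive.
Import Order.TTheory GRing.Theory Num.Theory.
Import numFieldNormedType.Exports.
Local Open Scope classical_set_scope.
Local Open Scope ring_scope.

Definition nowhere_dense {K : topologicalType} (A : set K) : Prop :=
  interior (closure A) = set0.

Definition first_category {K : topologicalType} (A : set K) : Prop :=
  exists N : nat -> set K, (forall n, nowhere_dense (N n)) /\
    A `<=` \bigcup_n N n.

Definition bounded_fun {K : Type} {R : realType} (f : K -> R) : Prop :=
  exists M : R, forall x, `|f x| <= M.

Definition supp {K : Type} {R : realType} (f : K -> R) : set K :=
  [set x | f x != 0].

Definition in_mK {K : topologicalType} {R : realType} (f : K -> R) : Prop :=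
  bounded_fun f /\ first_category (supp f).

(* Elements of Q_K: nonzero real algebra homomorphisms m_0(K) -> R, represented
   (via the universal property of the quotient l_infty(K)/m(K)) as real algebra
   homomorphisms l_infty(K) -> R vanishing on m(K).  Only the values on bounded
   functions matter. *)
Definition in_QK {K : topologicalType} {R : realType} (phi : (K -> R) -> R) : Prop :=
  [/\ forall f g, bounded_fun f -> bounded_fun g -> phi (f \+ g) = phi f + phi g,
      forall (c : R) f, bounded_fun f -> phi (fun x => c * f x) = c * phi f,
      forall f g, bounded_fun f -> bounded_fun g -> phi (f \* g) = phi f * phi g,
      forall f, in_mK f -> phi f = 0
    & exists f, bounded_fun f /\ phi f != 0].

(* U is open in Q_K for the weak* topology (the topology of pointwise
   convergence on m_0(K), i.e. generated by the evaluations at classes [f],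
   f bounded): every point of U has a basic weak* neighbourhood inside U. *)
Definition weakstar_open_QK {K : topologicalType} {R : realType}
  (U : set ((K -> R) -> R)) : Prop :=
  U `<=` in_QK /\
  forall phi, U phi ->
    exists (s : seq (K -> R)) (e : R), 0 < e /\ (forall f, f \in s -> bounded_fun f) /\
      forall psi, in_QK psi ->
        (forall f, f \in s -> `|psi f - phi f| < e) -> U psi.

Definition ulim {K : topologicalType} {R : realType} (F : set_system K) :
  (K -> R) -> R := fun f => lim (f @ F).

From Pilot Require Import Defs.
From HB Require Import structures.
From mathcomp Require Import all_boot all_order all_algebra.
From mathcomp Require Import all_classical all_reals all_analysis.
Import Order.TTheory GRing.Theory Num.Theory.
Import numFieldNormedType.Exports.
Local Open Scope classical_set_scope.
Local Open Scope ring_scope.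

(* Take phi in U and a basic weak* neighbourhood of phi inside U, given by
   finitely many bounded f and a radius e.  As phi is a positive algebra
   homomorphism killing m(K), the set A of points where every f is within e/2
   of phi f has phi (1_A) = 1, so A is not of first category.  By Banach's
   category theorem A is of second category near every point of some nonempty
   open V.  For v in V, an ultrafilter refining the sets (A `&` W) `\` M, with
   W a neighbourhood of v and M of first category, converges to v, avoids
   first category sets and contains A; its limit functional is then within e
   of phi on each f, hence lies in U.  Limits along ultrafilters of bounded
   real functions exist without any assumption on K. *)

Section FirstCategory.
Context {K : topologicalType}.
Implicit Types (A B G : set K) (fam : set (set K)).

Lemma sub_first_category A B : A `<=` B -> first_category B -> first_category A.
Proof. by move=> AB [N [NN BN]]; exists N; split => // x /AB /BN. Qed.

Lemma first_category0 : first_category (@set0 K).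
Proof.
exists (fun _ => set0); split => // n; rewrite /nowhere_dense closure0.
by apply/seteqP; split => // x /interior_subset.
Qed.

Lemma first_categoryU A B :
  first_category A -> first_category B -> first_category (A `|` B).
Proof.
move=> [N1 [N1nd AN1]] [N2 [N2nd BN2]].
exists (fun n => if odd n then N1 n./2 else N2 n./2); split.
  by move=> n; case: (odd n).
move=> x [/AN1 [m _ N1x]|/BN2 [m _ N2x]].
  by exists m.*2.+1 => //=; rewrite odd_double /= uphalf_double.
by exists m.*2 => //=; rewrite odd_double half_double.
Qed.

Lemma nowhere_dense_setC G : open G -> closure G = setT -> nowhere_dense (~` G).
Proof.
move=> oG dG; rewrite /nowhere_dense -(closure_id (~` G)).1; last exact: open_closedC.
apply/seteqP; split => // x nGx.
have : closure G x by rewrite dG.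
by move=> /(_ _ nGx) [y [Gy /(_ Gy)]].
Qed.

(* Since the members of [fam] are open and pairwise disjoint, inside a member
   [W0] the union only sees its own piece [N W0 `&` W0]. *)
Lemma nowhere_dense_bigcup_trivIset fam (N : set K -> set K) :
  (forall W, fam W -> open W) -> trivIset fam id ->
  (forall W, fam W -> nowhere_dense (N W)) ->
  nowhere_dense (\bigcup_(W in fam) (N W `&` W)).
Proof.
move=> famo famI Nnd; set M := \bigcup_(W in fam) _.
apply/seteqP; split => // x; rewrite /interior nbhsE; move=> [Op [oOp Opx] OpM].
have [y [[W0 famW0 [_ W0y]] Opy]] := OpM x Opx Op (open_nbhs_nbhs (conj oOp Opx)).
have OW0_sub : Op `&` W0 `<=` closure (N W0).
  move=> z [Opz W0z] B Bz.
  have BW0z : nbhs z (B `&` W0).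
    by apply: filterI Bz _; apply: open_nbhs_nbhs; split => //; exact: famo.
  have [t [[W famW [Nt Wt]] [Bt W0t]]] := OpM z Opz _ BW0z.
  have <- : W = W0 by apply: famI => //; exists t.
  by exists t.
have : interior (closure (N W0)) y.
  rewrite /interior nbhsE; exists (Op `&` W0) => //; split => //.
  by apply: openI => //; exact: famo.
by rewrite (Nnd W0 famW0).
Qed.

Lemma first_category_bigcup_trivIset A fam :
  (forall W, fam W -> open W /\ first_category (A `&` W)) -> trivIset fam id ->
  first_category (A `&` \bigcup_(W in fam) W).
Proof.
move=> famP famI.
have /choice [N NP] : forall W, exists N : nat -> set K, fam W ->
    (forall n, nowhere_dense (N n)) /\ A `&` W `<=` \bigcup_n N n.
  move=> W; have [famW|nfamW] := pselect (fam W).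
    by have [_ [N NP]] := famP W famW; exists N.
  by exists (fun _ => set0) => /nfamW.
exists (fun n => \bigcup_(W in fam) (N W n `&` W)); split.
  move=> n; apply: nowhere_dense_bigcup_trivIset => //.
    by move=> W /famP[].
  by move=> W famW; exact: (NP W famW).1.
move=> x [Ax [W famW Wx]].
by have [n _ Nx] := (NP W famW).2 x (conj Ax Wx); exists n => //; exists W.
Qed.

(* A maximal disjoint family of open sets on which [A] is of
   first category has a dense union, off which [A] is nowhere dense. *)
Lemma first_category_locally A :
  (forall V, open V -> V !=set0 -> exists W,
     [/\ open W, W `<=` V, W !=set0 & first_category (A `&` W)]) ->
  first_category A.
Proof.
move=> Aloc.
pose P fam := (forall W, fam W -> open W /\ first_category (A `&` W)) /\
  trivIset fam id.
have [fam [[famP famI] fam_max]] :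
    exists fam, P fam /\ forall fam', fam `<` fam' -> ~ P fam'.
  apply: Zorn_bigcup => F FP Ftot; split; first by move=> W [X /FP[+ _]]; apply.
  move=> W1 W2 [X1 FX1 X1W1] [X2 FX2 X2W2].
  have [X12|X21] := Ftot _ _ FX1 FX2.
    by apply: (FP _ FX2).2 => //; exact: X12.
  by apply: (FP _ FX1).2 => //; exact: X21.
set G := \bigcup_(W in fam) W.
have oG : open G by apply: bigcup_open => W /famP[].
have dG : closure G = setT.
  apply/seteqP; split => // x _; apply: contrapT => nGx.
  have oGc : open (~` closure G) by exact/closed_openC/closed_closure.
  have [W [oW WnG [y Wy] AW]] := Aloc _ oGc (ex_intro _ x nGx).
  have WG z : W z -> ~ G z by move=> /WnG nGz Gz; apply: nGz; exact: subset_closure.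
  apply: (fam_max (fam `|` [set W])).
    rewrite properEneq; split; last by move=> ? ?; left.
    apply/eqP => E; have : (fam `|` [set W]) W by right.
    by rewrite -E => famW; apply: (WG y Wy); exists W.
  split; first by move=> W0 /= [/famP //|->].
  move=> W1 W2 /= [f1|->] [f2|->] //; first exact: famI.
    by move=> [z [W1z Wz]]; case: (WG z Wz); exists W1.
  by move=> [z [Wz W2z]]; case: (WG z Wz); exists W2.
have AG : A `<=` (A `&` G) `|` ~` G.
  by move=> x Ax; have [Gx|nGx] := pselect (G x); [left|right].
apply: sub_first_category AG _; apply: first_categoryU.
  exact: first_category_bigcup_trivIset.
exists (fun _ => ~` G); split => [_|x nGx]; first exact: nowhere_dense_setC.
by exists 0%N.
Qed.

Lemma second_category_localize A : ~ first_category A ->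
  exists V, [/\ open V, V !=set0 &
    forall v, V v -> forall W, nbhs v W -> ~ first_category (A `&` W)].
Proof.
move=> nA; apply: contrapT => noV; apply/nA/first_category_locally => V oV [v Vv].
apply: contrapT => noW; apply: noV; exists V; split; [by []|by exists v|].
move=> x Vx W; rewrite nbhsE; move=> [Op [oOp Opx] OpW] AW.
apply: noW; exists (Op `&` V); split; [exact: openI|by move=> ? []|by exists x|].
by apply: sub_first_category AW => y [Ay [/OpW Wy _]].
Qed.

Definition residual_filter A (v : K) : set_system K :=
  [set B | exists W M, [/\ nbhs v W, first_category M & (A `&` W) `\` M `<=` B]].

Section ResidualFilter.
Context {A : set K} {v : K}.
Hypothesis Anear : forall W, nbhs v W -> ~ first_category (A `&` W).

Lemma residual_filter_proper : ProperFilter (residual_filter A v).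
Proof.
apply: Build_ProperFilter_ex.
  move=> B [W [M [vW fcM AWMB]]]; apply: contrapT => B0.
  apply: (Anear W vW); apply: sub_first_category fcM => x [Ax Wx].
  by apply: contrapT => nMx; apply: B0; exists x; exact: AWMB.
split.
- by exists setT, set0; split; [exact: filterT|exact: first_category0|].
- move=> B C [W1 [M1 [vW1 fcM1 sB]]] [W2 [M2 [vW2 fcM2 sC]]].
  exists (W1 `&` W2), (M1 `|` M2); split; [exact: filterI|exact: first_categoryU|].
  move=> x [[Ax [W1x W2x]] nMx]; split.
    by apply: sB; split => // M1x; apply: nMx; left.
  by apply: sC; split => // M2x; apply: nMx; right.
- move=> B C BC [W [M [vW fcM sB]]]; exists W, M; split => //.
  exact: subset_trans BC.
Qed.

(* Refining the residual filter: the complement of a first category set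
   belongs to it, so no member of an ultrafilter refining it is of first
   category. *)
Lemma second_category_ultra_cvg : exists G : set_system K,
  [/\ UltraFilter G, (forall B, G B -> ~ first_category B), G --> v & G A].
Proof.
have [G [Gultra resG]] := ultraFilterLemma residual_filter_proper.
exists G; split => //.
- move=> B GB fcB.
  have GnB : G (~` B) by apply: resG; exists setT, B; split => //; exact: filterT.
  by have [x []] := filter_ex (filterI GB GnB).
- move=> W vW; apply: resG; exists W, set0.
  by split => //; [exact: first_category0|move=> x [[]]].
- apply: resG; exists setT, set0.
  by split => //; [exact: filterT|exact: first_category0|move=> x [[]]].
Qed.

End ResidualFilter.

End FirstCategory.

Section BoundedFun.
Context {K : Type} {R : realType}.
Implicit Types (f g : K -> R).

Lemma bounded_fun_cst (c : R) : Defs.bounded_fun (fun _ : K => c).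
Proof. by exists `|c|. Qed.

Lemma bounded_funD {f g} :
  Defs.bounded_fun f -> Defs.bounded_fun g -> Defs.bounded_fun (f \+ g).
Proof.
move=> [M fM] [N gN]; exists (M + N) => x.
by rewrite (le_trans (ler_normD _ _)) // lerD.
Qed.

Lemma bounded_funM {f g} :
  Defs.bounded_fun f -> Defs.bounded_fun g -> Defs.bounded_fun (f \* g).
Proof. by move=> [M fM] [N gN]; exists (M * N) => x; rewrite normrM ler_pM. Qed.

Lemma bounded_fun_indic (B : set K) : Defs.bounded_fun (\1_B : K -> R).
Proof. by exists 1 => x; rewrite indicE; case: (x \in B); rewrite ?normr1 ?normr0. Qed.

End BoundedFun.

Section QK.
Context {K : topologicalType} {R : realType} (phi : (K -> R) -> R).
Hypothesis phiQ : in_QK phi.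
Implicit Types (f g : K -> R) (B C : set K).

Let phiD {f g} : Defs.bounded_fun f -> Defs.bounded_fun g -> phi (f \+ g) = phi f + phi g.
Proof. by case: phiQ => + _ _ _ _; apply. Qed.

Let phiZ (c : R) {f} : Defs.bounded_fun f -> phi (fun x => c * f x) = c * phi f.
Proof. by case: phiQ => _ + _ _ _; apply. Qed.

Let phiM {f g} : Defs.bounded_fun f -> Defs.bounded_fun g -> phi (f \* g) = phi f * phi g.
Proof. by case: phiQ => _ _ + _ _; apply. Qed.

Let phi_mK {f} : in_mK f -> phi f = 0.
Proof. by case: phiQ => _ _ _ + _; apply. Qed.

Lemma phi_cst (c : R) : phi (fun _ => c) = c.
Proof.
have phi1 : phi (fun _ => 1) = 1.
  case: phiQ => _ _ _ _ [f [bf phif0]].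
  have := phiM (bounded_fun_cst 1) bf.
  have -> : (fun _ => 1) \* f = f by apply/funext => x /=; rewrite mul1r.
  by move/(congr1 (fun y => y / phi f)); rewrite mulfK // divff.
have -> : (fun _ => c) = (fun x : K => c * 1) by apply/funext => x; rewrite mulr1.
by rewrite (phiZ _ (bounded_fun_cst 1)) phi1 mulr1.
Qed.

Lemma phi_subr f (c : R) : Defs.bounded_fun f -> phi (fun x => f x - c) = phi f - c.
Proof. by move=> bf; have := phiD bf (bounded_fun_cst (- c)); rewrite phi_cst. Qed.

(* Nonnegative functions are squares. *)
Lemma phi_ge0 g : Defs.bounded_fun g -> (forall x, 0 <= g x) -> 0 <= phi g.
Proof.
move=> [M gM] g0; pose h x := Num.sqrt (g x).
have bh : Defs.bounded_fun h.
  exists (Num.sqrt M) => x; rewrite /h ger0_norm ?sqrtr_ge0 // ler_wsqrtr //.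
  by have := gM x; rewrite ger0_norm.
have -> : g = h \* h by apply/funext => x; rewrite /= -expr2 sqr_sqrtr.
by rewrite phiM // -expr2 sqr_ge0.
Qed.

Lemma phi_le {f g} : Defs.bounded_fun f -> Defs.bounded_fun g ->
  (forall x, f x <= g x) -> phi f <= phi g.
Proof.
move=> bf bg fg.
have bNf : Defs.bounded_fun (fun x => -1 * f x).
  exact: bounded_funM (bounded_fun_cst (-1)) bf.
have := @phi_ge0 _ (bounded_funD bg bNf); rewrite phiD // phiZ // mulN1r subr_ge0.
by apply => x; rewrite /= mulN1r subr_ge0.
Qed.

Definition large B := phi (\1_B) = 1.

Lemma large_setT : large setT.
Proof.
by rewrite /large -[RHS](phi_cst 1); congr phi; apply/funext => x; rewrite indicT.
Qed.

Lemma largeI B C : large B -> large C -> large (B `&` C).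
Proof.
rewrite /large indicI (phiM (bounded_fun_indic B) (bounded_fun_indic C)).
by move=> -> ->; rewrite mulr1.
Qed.

Lemma large_not_first_category B : large B -> ~ first_category B.
Proof.
move=> LB fcB; suff : phi (\1_B) = 0 by rewrite LB => /eqP; rewrite oner_eq0.
apply: phi_mK; split; first exact: bounded_fun_indic.
apply: sub_first_category fcB => x; rewrite /supp /= indicE.
by case: (boolP (x \in B)) => [/set_mem|_] //; rewrite eqxx.
Qed.

Lemma phi_indic_idem B : phi (\1_B) = 0 \/ phi (\1_B) = 1.
Proof.
have : phi (\1_B) * phi (\1_B) = phi (\1_B).
  by rewrite -(phiM (bounded_fun_indic B) (bounded_fun_indic B)) -indicI setIid.
move/eqP; rewrite -subr_eq0 -[X in _ - X]mulr1 -mulrBr mulf_eq0 subr_eq0.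
by case/orP => /eqP; [left|right].
Qed.

Lemma large_setC_null B : phi (\1_(~` B)) = 0 -> large B.
Proof.
move=> nullC; rewrite /large.
have <- : phi (\1_B \+ \1_(~` B)) = 1.
  rewrite -[RHS](phi_cst 1); congr phi; apply/funext => x /=.
  by rewrite !indicE in_setC; case: (x \in B); rewrite ?addr0 ?add0r.
by rewrite phiD ?nullC ?addr0 //; exact: bounded_fun_indic.
Qed.

(* If [p := phi 1_C] with [C := |f - phi f| >= d], then
   [d^2 p <= phi ((f - phi f)^2 1_C) = phi (f - phi f)^2 p = 0], and [p] is
   [0] or [1]. *)
Lemma large_near f (d : R) : Defs.bounded_fun f -> 0 < d ->
  large [set x | `|f x - phi f| < d].
Proof.
move=> bf d0; set A := [set x | _]; set C := ~` A; apply: large_setC_null.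
have bC : Defs.bounded_fun (\1_C : K -> R) := bounded_fun_indic C.
pose g x := f x - phi f.
have bg : Defs.bounded_fun g := bounded_funD bf (bounded_fun_cst (- phi f)).
have le_dC x : d ^+ 2 * \1_C x <= g x * g x * \1_C x.
  rewrite indicE; case: (boolP (x \in C)) => [/set_mem Cx|_]; last by rewrite !mulr0.
  rewrite !mulr1 -expr2 -[g x ^+ 2]real_normK ?num_real //.
  rewrite lerXn2r ?nnegrE ?normr_ge0 ?(ltW d0) //.
  by rewrite leNgt; apply/negP.
have bgC : Defs.bounded_fun (g \* g \* \1_C) := bounded_funM (bounded_funM bg bg) bC.
have := phi_le (bounded_funM (bounded_fun_cst _) bC) bgC le_dC.
rewrite (phiZ _ bC) (phiM (bounded_funM bg bg) bC) (phiM bg bg) phi_subr //.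
rewrite subrr !mul0r pmulr_rle0 ?exprn_gt0 //.
by have [|->] := phi_indic_idem C; last rewrite ler10.
Qed.

Lemma large_seq (s : seq (K -> R)) (d : R) :
  (forall f, f \in s -> Defs.bounded_fun f) -> 0 < d ->
  large [set x | forall f, f \in s -> `|f x - phi f| < d].
Proof.
move=> + d0; elim: s => [_|f s IHs bs].
  suff -> : [set x | forall f, f \in [::] -> `|f x - phi f| < d] = setT.
    exact: large_setT.
  by apply/seteqP; split.
rewrite (_ : [set x | _] = [set x | `|f x - phi f| < d] `&`
                          [set x | forall g, g \in s -> `|g x - phi g| < d]).
  apply: largeI; first by apply: large_near => //; apply: bs; rewrite mem_head.
  by apply: IHs => g gs; apply: bs; rewrite in_cons gs orbT.
apply/seteqP; split => x /=.
  move=> near_x; split => [|g gs]; apply: near_x.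
    exact: mem_head.
  by rewrite in_cons gs orbT.
by move=> [near_fx near_sx] g; rewrite in_cons => /orP[/eqP ->|/near_sx].
Qed.

End QK.

Section UltraLimit.
Context {K : topologicalType} {R : realType}.
Context (G : set_system K) (G_ultra : UltraFilter G).

(* A bounded function is ultimately in a compact segment, and an ultrafilter
   converges to a point of any compact set it contains. *)
Lemma ulim_cvg {f : K -> R} : Defs.bounded_fun f -> f @ G --> ulim G f.
Proof.
move=> [M fM]; suff [l fl] : exists l : R, f @ G --> l.
  by rewrite /ulim (cvg_lim (@Rhausdorff R) fl).
have GfM : (f @ G) `[-M, M]%classic.
  by apply: (@filterE _ G) => x; rewrite /= in_itv /= -ler_norml fM.
have [l [_ cl]] := segment_compact _ GfM.
exists l => B lB; have [//|GnB] := in_ultra_setVsetC (f @^-1` B) G_ultra.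
by have [y []] := cl (~` B) B GnB lB.
Qed.

Lemma ulim_in_QK :
  (forall A, G A -> ~ first_category A) -> in_QK (ulim G : (K -> R) -> R).
Proof.
move=> G_nfc; split.
- move=> f g bf bg; apply: (cvg_lim (@Rhausdorff R)).
  exact: cvgD (ulim_cvg bf) (ulim_cvg bg).
- move=> c f bf; apply: (cvg_lim (@Rhausdorff R)).
  exact: cvgM (cvg_cst c) (ulim_cvg bf).
- move=> f g bf bg; apply: (cvg_lim (@Rhausdorff R)).
  exact: cvgM (ulim_cvg bf) (ulim_cvg bg).
- move=> f [_ fc_supp]; apply: (cvg_lim (@Rhausdorff R)); apply: cvg_near_cst.
  have [G_supp|G_nsupp] := in_ultra_setVsetC (supp f) G_ultra.
    by case: (G_nfc _ G_supp).
  by apply: filterS G_nsupp => x /= nx; apply: contrapT => fx0; apply/nx/eqP.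
- exists (fun _ => 1); split; first exact: bounded_fun_cst.
  by rewrite /ulim (cvg_lim (@Rhausdorff R) (cvg_cst (1 : R))) oner_eq0.
Qed.

Lemma ulim_near (f : K -> R) (c d : R) (A : set K) : Defs.bounded_fun f ->
  G A -> (forall x, A x -> `|f x - c| < d) -> `|ulim G f - c| < d + d.
Proof.
move=> bf GA Ad.
have d0 : 0 < d by have [x Ax] := filter_ex GA; exact: le_lt_trans (Ad x Ax).
have near_ulim : \forall t \near G, `|ulim G f - f t| < d.
  by move: (ulim_cvg bf) => /cvgrPdist_lt; apply.
have [t [At ft]] := filter_ex (filterI GA near_ulim).
by rewrite (le_lt_trans (ler_distD (f t) _ _)) // ltrD // Ad.
Qed.

End UltraLimit.

Theorem mainTheorem7 (R : realType) (K : topologicalType)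
  (Kcomp : compact [set: K]) (Khaus : hausdorff_space K)
  (Knoiso : forall x : K, ~ open [set x])
  (U : set ((K -> R) -> R)) (Uopen : weakstar_open_QK U) (Une : U !=set0) :
  exists V : set K, open V /\ V !=set0 /\
    forall v, V v ->
      exists Uv : set_system K,
        [/\ UltraFilter Uv,
            (forall A, Uv A -> ~ first_category A),
            Uv --> v
          & U (ulim Uv)].
Proof.
have [phi Uphi] := Une; have [UQK Uo] := Uopen.
have [s [e [e0 [bs phiU]]]] := Uo phi Uphi.
pose A := [set x | forall f, f \in s -> `|f x - phi f| < e / 2].
have LA : large phi A by apply: large_seq => //; [exact: UQK | rewrite divr_gt0].
have nfcA : ~ first_category A by apply: large_not_first_category LA; exact: UQK.
have [V [oV V0 Anear]] := second_category_localize _ nfcA.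
exists V; split => //; split => // v Vv.
have [G [G_ultra G_nfc Gv GA]] := second_category_ultra_cvg (Anear v Vv).
exists G; split => //; apply: phiU; first exact: ulim_in_QK.
move=> f fs; rewrite [e in _ < e](splitr e).
by apply: ulim_near GA _ => [|x Ax]; [exact: bs | exact: Ax].
Qed.
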